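(* Let $X=\{x_j:j\in J\}\subset\mathbb{R}^2$ be finite with $n=|J|$ and quadratic min-power centre $s^*$. There exist multipliers $\lambda_j\geq0$, $j\in J$, at most $3$ of which are nonzero, such that $s^*=\sum_{j\in J}\lambda_jM_j$, $\sum_{j\in J}\lambda_j=1$, and $\lambda_j\big(\|s^*-x_j\|-\max_{i\in J}\|s^*-x_i\|\big)=0$ for all $j\in J$.
   Context: $s^*$ is the unique minimiser of $P(s)=\sum_{i\in J}\|s-x_i\|^2+\max_{i\in J}\|s-x_i\|^2$; $M_j=\frac{1}{n+1}\big(x_j+\sum_{i\in J}x_i\big)$. *)

From HB Require Import structures.
From mathcomp Require Import all_boot all_order all_algebra.
From mathcomp Require Import reals.
Set Implicit Arguments. Unset Strict Implicit. Unset Printing Implicit Defensive.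
Import Order.TTheory GRing.Theory Num.Theory.
Local Open Scope ring_scope.

Section Defs.
Variable R : realType.

Definition sqdist (s y : 'rV[R]_2) : R := \sum_(k < 2) (s 0 k - y 0 k) ^+ 2.

Definition edist (s y : 'rV[R]_2) : R := Num.sqrt (sqdist s y).

Variable J : finType.

(* max over J of nonnegative quantities (the seed 0 is harmless: all terms are >= 0
   and J is assumed nonempty) *)
Definition maxJ (f : J -> R) : R := \big[Num.max/0]_(i : J) f i.

Definition Ppow (x : J -> 'rV[R]_2) (s : 'rV[R]_2) : R :=
  \sum_(i : J) sqdist s (x i) + maxJ (fun i => sqdist s (x i)).

Definition Mpt (x : J -> 'rV[R]_2) (j : J) : 'rV[R]_2 :=
  (#|J|.+1%:R)^-1 *: (x j + \sum_(i : J) x i).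
End Defs.

(* [Ppow x] is the pointwise maximum of the branches
   [Pbranch j t = sum_i |t - x_i|^2 + |t - x_j|^2], and the half-gradient of [Pbranch j]
   at [s] is [(n+1)(s - M_j)].  If 0 were not a convex combination of the half-gradients [v_j]
   of the branches active at [s] (those of the points farthest from [s]), the point [p]
   of minimal norm in their convex hull would satisfy [<p, v_j> >= |p|^2 > 0] for every
   active [j], so moving [s] a little in the direction [-p] would decrease every branch,
   contradicting minimality.  A convex combination of the half-gradients equal to 0 writes
   [s] as a convex combination of the [M_j] over farthest points, and Caratheodory's
   theorem in the plane cuts it down to at most three nonzero weights. *)

From mathcomp Require Import all_boot all_order all_algebra.
From mathcomp Require Import reals ring lra.
From mathcomp Require classical_sets topology normedtype derive.
Set Implicit Arguments. Unset Strict Implicit. Unset Printing Implicit Defensive.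
Import Order.TTheory GRing.Theory Num.Theory.
Local Open Scope ring_scope.

Section DotProduct.
Variables (R : realFieldType) (n : nat).
Implicit Types u w : 'rV[R]_n.

Definition dotv u w : R := \sum_k u 0 k * w 0 k.
Definition sqnorm u : R := dotv u u.

Lemma dotvC u w : dotv u w = dotv w u.
Proof. by apply: eq_bigr => k _; rewrite mulrC. Qed.

Lemma dotvDl u1 u2 w : dotv (u1 + u2) w = dotv u1 w + dotv u2 w.
Proof. by rewrite /dotv -big_split; apply: eq_bigr => k _; rewrite mxE mulrDl. Qed.

Lemma dotvZl a u w : dotv (a *: u) w = a * dotv u w.
Proof. by rewrite /dotv mulr_sumr; apply: eq_bigr => k _; rewrite mxE mulrA. Qed.

Lemma dotvNl u w : dotv (- u) w = - dotv u w.
Proof. by rewrite -scaleN1r dotvZl mulN1r. Qed.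

Lemma dotvBl u1 u2 w : dotv (u1 - u2) w = dotv u1 w - dotv u2 w.
Proof. by rewrite dotvDl dotvNl. Qed.

Lemma dotv_suml (I : Type) (r : seq I) (P : pred I) (F : I -> 'rV[R]_n) w :
  dotv (\sum_(i <- r | P i) F i) w = \sum_(i <- r | P i) dotv (F i) w.
Proof.
rewrite /dotv exchange_big; apply: eq_bigr => k _.
by rewrite summxE mulr_suml.
Qed.

Lemma sqnorm_ge0 u : 0 <= sqnorm u.
Proof. by apply: sumr_ge0 => k _; rewrite -expr2 sqr_ge0. Qed.

Lemma sqnorm_eq0 u : (sqnorm u == 0) = (u == 0).
Proof.
apply/idP/eqP => [/eqP u0|->]; last by rewrite /sqnorm /dotv big1 // => k _; rewrite mxE mulr0.
apply/rowP => k; rewrite mxE; apply/eqP; rewrite -sqrf_eq0 expr2; apply/eqP.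
by apply: (psumr_eq0P _ u0) => // i _; rewrite -expr2 sqr_ge0.
Qed.

Lemma sqnormDZ u w (e : R) :
  sqnorm (u + e *: w) = sqnorm u + 2 * e * dotv u w + e ^+ 2 * sqnorm w.
Proof.
rewrite /sqnorm !dotvDl !dotvZl ![dotv _ (_ + _)]dotvC !dotvDl !dotvZl.
by rewrite [dotv w u]dotvC; ring.
Qed.

End DotProduct.

Lemma nonzero_left_kernel (F : fieldType) m n (A : 'M[F]_(m, n)) :
  (n < m)%N -> exists2 u : 'rV_m, u != 0 & u *m A = 0.
Proof.
move=> ltnm; have : kermx A != 0.
  by rewrite kermx_eq0 /row_free neq_ltn (leq_ltn_trans (rank_leq_col A)).
by case/rowV0Pn => u /sub_kermxP uA u0; exists u.
Qed.

Section Caratheodory.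
Variables (R : realFieldType) (J : finType).

Definition supp (mu : J -> R) : {set J} := [set j | mu j != 0].

Lemma supp_subsetP (mu : J -> R) (A : {set J}) :
  reflect (forall j, j \notin A -> mu j = 0) (supp mu \subset A).
Proof.
apply: (iffP subsetP) => muA j; last by rewrite inE; apply: contraR => /muA ->.
by move=> jA; apply/eqP; apply: contraNT jA => muj; apply: muA; rewrite inE.
Qed.

Variables (k : nat) (a : J -> 'rV[R]_k).

Lemma affine_dependence (S : {set J}) : (k.+1 < #|S|)%N ->
  exists alpha : J -> R, [/\ supp alpha != set0, supp alpha \subset S,
    \sum_j alpha j = 0 & \sum_j alpha j *: a j = 0].
Proof.
move=> ltkS; have [j0 j0S] : exists j0, j0 \in S.
  by apply/card_gt0P; apply: leq_ltn_trans ltkS.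
pose w j : 'rV[R]_(1 + k) := row_mx (const_mx 1) (a j).
pose M : 'M_(#|S|, 1 + k) := \matrix_i w (enum_val i).
have [u u0 uM] := nonzero_left_kernel M ltkS.
pose alpha j := if j \in S then u 0 (enum_rank_in j0S j) else 0.
have w_sum : \sum_j alpha j *: w j = 0.
  rewrite -[RHS]uM mulmx_sum_row (big_enum_rank j0S) [RHS]big_mkcond.
  apply: eq_bigr => j _.
  by rewrite /alpha; case: ifP => [jS|_]; rewrite ?rowK ?enum_rankK_in ?scale0r.
exists alpha; split.
- case/rV0Pn: u0 => i ui; apply/set0Pn; exists (enum_val i).
  by rewrite inE /alpha enum_valP enum_valK_in.
- by apply/subsetP => j; rewrite inE /alpha; case: ifP => // _; rewrite eqxx.
- move/(congr1 lsubmx): w_sum; rewrite linear_sum linear0.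
  under eq_bigr do rewrite linearZ /= row_mxKl.
  move/(congr1 (fun m : 'M_1 => m 0 0)); rewrite summxE mxE.
  by under eq_bigr do rewrite !mxE mulr1.
- move/(congr1 rsubmx): w_sum; rewrite linear_sum linear0.
  by under eq_bigr do rewrite linearZ /= row_mxKr.
Qed.

Lemma caratheodory_step (mu : J -> R) : (forall j, 0 <= mu j) ->
  (k.+1 < #|supp mu|)%N -> \sum_j mu j *: a j = 0 ->
  exists nu : J -> R, [/\ forall j, 0 <= nu j, supp nu \proper supp mu,
    \sum_j nu j = \sum_j mu j & \sum_j nu j *: a j = 0].
Proof.
move=> mu0 ltk mu_a.
have [alpha [alpha_neq0 alpha_mu alpha_sum alpha_a]] := affine_dependence ltk.
have [j1 alpha_j1] : exists j1, 0 < alpha j1.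
  apply/existsP; apply: contraNT alpha_neq0; rewrite negb_exists => /forallP alpha_le0.
  have alphaN0 j : 0 <= - alpha j by rewrite oppr_ge0 leNgt alpha_le0.
  have alphaN_sum : \sum_j - alpha j = 0 by rewrite sumrN alpha_sum oppr0.
  apply/eqP/setP => j; rewrite !inE -oppr_eq0.
  by rewrite (psumr_eq0P (fun j _ => alphaN0 j) alphaN_sum) ?eqxx.
(* the largest step along [- alpha] that keeps [mu] nonnegative *)
case: (@arg_minP _ _ _ j1 (fun j => 0 < alpha j) (fun j => mu j / alpha j) alpha_j1).
move=> jm alpha_jm t_min.
set t := mu jm / alpha jm in t_min.
have t0 : 0 <= t by rewrite divr_ge0 ?mu0 ?ltW.
have supp_alpha j : mu j = 0 -> alpha j = 0.
  by move=> muj; apply: (elimT (supp_subsetP _ _) alpha_mu); rewrite inE muj eqxx.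
exists (fun j => mu j - t * alpha j); split.
- move=> j; rewrite subr_ge0; have [alpha_j|] := ltrP 0 (alpha j).
    by rewrite -ler_pdivlMr // t_min.
  by move=> alpha_j; apply: le_trans (mu0 j); rewrite mulr_ge0_le0.
- apply/properP; split.
    apply/subsetP => j; rewrite !inE; apply: contraNN => /eqP muj.
    by rewrite muj supp_alpha // mulr0 subrr.
  exists jm; first by apply: (subsetP alpha_mu); rewrite inE gt_eqF.
  by rewrite inE negbK /t divfK ?subrr // gt_eqF.
- by rewrite sumrB -mulr_sumr alpha_sum mulr0 subr0.
- under eq_bigr do rewrite scalerBl -scalerA.
  by rewrite sumrB -scaler_sumr alpha_a mu_a scaler0 subr0.
Qed.

Lemma caratheodory (mu : J -> R) :
  (forall j, 0 <= mu j) -> \sum_j mu j *: a j = 0 ->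
  exists lam : J -> R, [/\ forall j, 0 <= lam j, supp lam \subset supp mu,
    (#|supp lam| <= k.+1)%N, \sum_j lam j = \sum_j mu j & \sum_j lam j *: a j = 0].
Proof.
have [m] := ubnP #|supp mu|; elim: m mu => // m IH mu lt_mu_m mu0 mu_a.
have [le_mu_k|lt_k_mu] := leqP #|supp mu| k.+1; first by exists mu.
have [nu [nu0 nu_mu nu_sum nu_a]] := caratheodory_step mu0 lt_k_mu mu_a.
have lt_nu_m : (#|supp nu| < m)%N by apply: leq_trans (proper_card nu_mu) _.
have [lam [lam0 lam_nu lam_k lam_sum lam_a]] := IH nu lt_nu_m nu0 nu_a.
exists lam; split=> //; last by rewrite lam_sum.
exact: subset_trans lam_nu (proper_sub nu_mu).
Qed.
End Caratheodory.

Section ConvexWeights.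
Variables (R : realFieldType) (J : finType).

Definition weights_on (A : {set J}) (mu : J -> R) : Prop :=
  [/\ forall j, 0 <= mu j, \sum_j mu j = 1 & supp mu \subset A].

Lemma ge0_of_small_steps (a b : R) :
  (forall e, 0 < e -> e <= 1 -> 0 <= 2 * e * a + e ^+ 2 * b) -> 0 <= a.
Proof.
move=> H; rewrite leNgt; apply/negP => a_lt0.
have den_gt0 : `|b| - a > 0 by have := normr_ge0 b; lra.
pose e := - a / (`|b| - a).
have e0 : 0 < e by rewrite divr_gt0 // oppr_gt0.
have e1 : e <= 1 by rewrite ler_pdivrMr // mul1r; have := normr_ge0 b; lra.
have eE : e * (`|b| - a) = - a by rewrite divfK // gt_eqF.
have eb : e ^+ 2 * b <= e ^+ 2 * `|b| by rewrite ler_wpM2l ?sqr_ge0 ?ler_norm.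
have := H e e0 e1; nra.
Qed.

Lemma min_norm_le_dotv n (A : {set J}) (v : J -> 'rV[R]_n) (mu : J -> R) :
  weights_on A mu ->
  (forall nu, weights_on A nu ->
    sqnorm (\sum_i mu i *: v i) <= sqnorm (\sum_i nu i *: v i)) ->
  forall j, j \in A -> sqnorm (\sum_i mu i *: v i) <= dotv (\sum_i mu i *: v i) (v j).
Proof.
move=> [mu0 mu1 /supp_subsetP muA] mu_min j jA; set p := \sum_i mu i *: v i.
pose nu e i := (1 - e) * mu i + (if i == j then e else 0).
have nuW e : 0 <= e -> e <= 1 -> weights_on A (nu e).
  move=> e0 e1; split.
  - by move=> i; rewrite addr_ge0 ?mulr_ge0 ?subr_ge0 //; case: eqP.
  - rewrite big_split /= -mulr_sumr mu1 mulr1 (bigD1 j) //= eqxx.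
    by rewrite big1 ?addr0 ?subrK // => i /negbTE ->.
  - apply/supp_subsetP => i iA; rewrite /nu muA // mulr0 add0r.
    by case: eqP iA => // ->; rewrite jA.
have nuE e : \sum_i nu e i *: v i = p + e *: (v j - p).
  rewrite /nu; under eq_bigr do rewrite scalerDl -scalerA.
  rewrite big_split /= -scaler_sumr -/p (bigD1 j) //= eqxx.
  rewrite big1 => [|i /negbTE ->]; last exact: scale0r.
  by rewrite addr0 scalerBl scale1r scalerBr addrAC -addrA.
rewrite -subr_ge0; apply: (ge0_of_small_steps (b := sqnorm (v j - p))) => e e0 e1.
have := mu_min _ (nuW e (ltW e0) e1); rewrite nuE sqnormDZ.
rewrite -/p dotvC dotvBl [dotv (v j) p]dotvC -/(sqnorm p); lra.
Qed.

End ConvexWeights.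

Section MinNormPoint.
Import classical_sets topology normedtype derive numFieldNormedType.Exports.
Local Open Scope classical_set_scope.
Variables (R : realType) (J : finType).

Lemma sqnorm_continuous n : continuous (@sqnorm R n : 'rV[R]_n -> R).
Proof.
apply: continuous_big => [|k _]; first exact: add_continuous.
by move=> u; apply: continuousM; exact: coord_continuous.
Qed.

Lemma min_norm_weights n (A : {set J}) (v : J -> 'rV[R]_n) (j0 : J) : j0 \in A ->
  exists2 mu, weights_on A mu & forall nu, weights_on A nu ->
    sqnorm (\sum_j mu j *: v j) <= sqnorm (\sum_j nu j *: v j).
Proof.
move=> j0A.
(* Minimise over a compact simplex of [R^#|J|], read as weights on [A] by forgetting the
   coordinates outside [A]. *)
pose wt (r : 'rV[R]_#|J|) j := if j \in A then r 0 (enum_rank j) else 0.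
pose box := [set r : 'rV[R]_#|J| | forall i, `[(0 : R), 1] (r ord0 i)].
pose D := box `&` (fun r => \sum_j wt r j) @^-1` [set 1].
have wt_continuous j : continuous (wt^~ j).
  by rewrite /wt; case: (j \in A); [exact: coord_continuous | exact: cst_continuous].
have D_compact : compact D.
  have box_compact : compact box.
    by apply: (@rV_compact _ _ (fun=> `[(0 : R), 1])) => _; exact: segment_compact.
  apply: (subclosed_compact _ box_compact); last exact: subIsetl.
  apply: closedI; first exact: (compact_closed (@norm_hausdorff _ _)).
  have : continuous (fun r => \sum_j wt r j).
    by apply: continuous_big => [|j _]; [exact: add_continuous | exact: wt_continuous].
  by move/continuous_closedP; apply; exact: closed_eq.
have F_continuous : continuous (fun r => sqnorm (\sum_j wt r j *: v j)).
  move=> r; apply: (continuous_comp (f := fun r => \sum_j wt r j *: v j));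
    last exact: sqnorm_continuous.
  apply: continuous_big => [|j _ {}r]; first exact: add_continuous.
  by apply: continuousZ; [exact: wt_continuous | exact: cst_continuous].
have wt_row (nu : J -> R) j : supp nu \subset A -> wt (\row_i nu (enum_val i)) j = nu j.
  by move=> /supp_subsetP nuA; rewrite /wt mxE enum_rankK; case: ifPn => // /nuA ->.
have D_row nu : weights_on A nu -> D (\row_i nu (enum_val i)).
  case=> nu0 nu1 nuA; split=> [i|] /=; last first.
    by rewrite -nu1; apply: eq_bigr => j _; rewrite wt_row.
  rewrite mxE in_itv /= nu0 -nu1 (bigD1 (enum_val i)) //= lerDl.
  exact: sumr_ge0.
have D0 : D !=set0.
  exists (\row_i (enum_val i == j0)%:R); apply: (D_row (fun j => (j == j0)%:R)); split.
  - by move=> j; rewrite ler0n.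
  - by rewrite (bigD1 j0) //= eqxx big1 ?addr0 // => j /negbTE ->.
  - by apply/supp_subsetP => j; case: eqP => // ->; rewrite j0A.
have [c Dc c_min] := EVT_min_rV D0 D_compact (continuous_subspaceT F_continuous).
move: Dc; rewrite inE => -[c01 c1].
exists (wt c); first split.
- move=> j; rewrite /wt; case: ifP => // _.
  by have := c01 (enum_rank j); rewrite /= in_itv /= => /andP[].
- exact: c1.
- by apply/supp_subsetP => j; rewrite /wt => /negbTE ->.
- move=> nu nuW; apply: le_trans (c_min _ (mem_set (D_row nu nuW))) _.
  by case: nuW => _ _ nuA; under eq_bigr do rewrite wt_row //.
Qed.

Lemma exists_step_quadratic_lt0 (I : finType) (a b : I -> R) (c : R) :
  (forall i, a i < 0 \/ (a i = 0 /\ b i < 0)) ->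
  exists e : R, forall i, a i + e * b i + e ^+ 2 * c < 0.
Proof.
move=> ab.
have near_i i : \forall e \near 0^'+, a i + e * b i + e ^+ 2 * c < 0.
  have e_gt0 := nbhs_right_gt (0 : R).
  case: (ab i) => [ai_lt0 | [-> bi_lt0]].
  - pose K := `|b i| + `|c| + 1.
    have K_gt0 : 0 < K by rewrite /K; have := normr_ge0 (b i); have := normr_ge0 c; lra.
    near=> e.
    have e0 : 0 < e by near: e.
    have e1 : e < 1 by near: e; exact: nbhs_right_lt.
    have eK : e * K < - a i.
      by rewrite -ltr_pdivlMr //; near: e; apply: nbhs_right_lt; rewrite divr_gt0 ?oppr_gt0.
    have : e * b i <= e * `|b i| by rewrite ler_pM2l // ler_norm.
    have : e ^+ 2 * c <= e ^+ 2 * `|c| by rewrite ler_wpM2l ?ler_norm ?sqr_ge0.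
    have : e ^+ 2 * `|c| <= e * `|c| by rewrite ler_wpM2r //; nra.
    rewrite /K in eK; lra.
  - pose K := `|c| + 1.
    have K_gt0 : 0 < K by rewrite /K; have := normr_ge0 c; lra.
    near=> e.
    have e0 : 0 < e by near: e.
    have eK : e * K < - b i.
      by rewrite -ltr_pdivlMr //; near: e; apply: nbhs_right_lt; rewrite divr_gt0 ?oppr_gt0.
    have : e ^+ 2 * c <= e ^+ 2 * `|c| by rewrite ler_wpM2l ?ler_norm ?sqr_ge0.
    rewrite /K in eK; nra.
have [e He] := filter_ex (filter_forall _ near_i).
by exists e.
Unshelve. all: by end_near.
Qed.

End MinNormPoint.

Section MinPowerCentre.
Variables (R : realType) (J : finType) (x : J -> 'rV[R]_2) (s : 'rV[R]_2).

Definition Pbranch (j : J) (t : 'rV[R]_2) : R := \sum_i sqdist t (x i) + sqdist t (x j).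

(* Half the gradient of [Pbranch j] at [s]. *)
Definition Pgrad (j : J) : 'rV[R]_2 := (s - x j) + \sum_i (s - x i).

Definition farthest : {set J} := [set j | sqdist s (x j) == maxJ (fun i => sqdist s (x i))].

Lemma sqdistE (t y : 'rV[R]_2) : sqdist t y = sqnorm (t - y).
Proof. by rewrite /sqnorm /dotv; apply: eq_bigr => k _; rewrite !mxE expr2. Qed.

Lemma Pbranch_shift j (d : 'rV[R]_2) (e : R) :
  Pbranch j (s + e *: d) =
    Pbranch j s + e * (2 * dotv (Pgrad j) d) + e ^+ 2 * (#|J|.+1%:R * sqnorm d).
Proof.
have shift y : sqdist (s + e *: d) y = sqdist s y + 2 * e * dotv (s - y) d + e ^+ 2 * sqnorm d.
  by rewrite !sqdistE addrAC sqnormDZ.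
rewrite /Pbranch shift; under eq_bigr do rewrite shift.
rewrite !big_split /= -!mulr_sumr sumr_const /Pgrad (dotvDl (s - x j)) dotv_suml.
rewrite -mulr_natl -natr1; ring.
Qed.

Lemma farthest_exists : (0 < #|J|)%N -> exists j, j \in farthest.
Proof.
case/card_gt0P => j0 _.
have [j _ jmax] := @eq_bigmax _ _ _ 0 j0 predT (fun i => sqdist s (x i)) isT
  (fun i _ => sumr_ge0 _ (fun k _ => sqr_ge0 _)).
by exists j; rewrite inE /maxJ jmax.
Qed.

Lemma Pbranch_farthest j : j \in farthest -> Pbranch j s = Ppow x s.
Proof. by rewrite inE => /eqP jmax; rewrite /Pbranch jmax. Qed.

Lemma Pbranch_lt j : j \notin farthest -> Pbranch j s < Ppow x s.
Proof.
rewrite inE => jmax; rewrite /Pbranch /Ppow ltrD2l lt_neqAle jmax.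
exact: le_bigmax.
Qed.

Lemma Ppow_lt_Pbranch (t : 'rV[R]_2) (b : R) : (0 < #|J|)%N ->
  (forall j, Pbranch j t < b) -> Ppow x t < b.
Proof.
case/card_gt0P => j0 _ tb; rewrite /Ppow -ltrBrDl; apply: bigmax_lt => [|j _].
  by have := tb j0; rewrite /Pbranch -ltrBrDl; apply: le_lt_trans; rewrite sqdistE sqnorm_ge0.
by have := tb j; rewrite /Pbranch -ltrBrDl.
Qed.

Lemma Ppow_descent (d : 'rV[R]_2) : (0 < #|J|)%N ->
  (forall j, j \in farthest -> dotv (Pgrad j) d < 0) -> exists t, Ppow x t < Ppow x s.
Proof.
move=> J0 d_descent.
have branch_step j : Pbranch j s - Ppow x s < 0 \/
    (Pbranch j s - Ppow x s = 0 /\ 2 * dotv (Pgrad j) d < 0).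
  have [jF|jF] := boolP (j \in farthest); last by left; rewrite subr_lt0 Pbranch_lt.
  by right; rewrite Pbranch_farthest // subrr; split=> //; rewrite pmulr_rlt0 ?d_descent.
have [e He] := exists_step_quadratic_lt0 (#|J|.+1%:R * sqnorm d) branch_step.
exists (s + e *: d); apply: Ppow_lt_Pbranch => // j.
by rewrite Pbranch_shift; have := He j; lra.
Qed.

Lemma zero_in_farthest_hull : (0 < #|J|)%N -> (forall t, Ppow x s <= Ppow x t) ->
  exists2 mu, weights_on farthest mu & \sum_j mu j *: Pgrad j = 0.
Proof.
move=> J0 s_min; have [j0 j0F] := farthest_exists J0.
have [mu muW mu_min] := min_norm_weights Pgrad j0F.
exists mu => //; apply/eqP; rewrite -sqnorm_eq0 eq_le sqnorm_ge0 andbT leNgt.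
apply/negP => p_gt0.
have [|t] := @Ppow_descent (- \sum_j mu j *: Pgrad j) J0; last by rewrite ltNge s_min.
move=> j jF; rewrite dotvC dotvNl.
by have := min_norm_le_dotv muW mu_min jF; lra.
Qed.

Lemma Pgrad_Mpt j : Pgrad j = #|J|.+1%:R *: (s - Mpt x j).
Proof.
rewrite /Pgrad /Mpt scalerBr scalerA mulfV ?pnatr_eq0 // scale1r.
rewrite sumrB sumr_const -scaler_nat -natr1 scalerDl scale1r.
by rewrite opprD addrACA [s + _]addrC.
Qed.

Lemma Mpt_barycentric (lam : J -> R) : \sum_j lam j = 1 ->
  \sum_j lam j *: Pgrad j = 0 -> s = \sum_j lam j *: Mpt x j.
Proof.
move=> lam1; under eq_bigr do rewrite Pgrad_Mpt scalerA mulrC -scalerA.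
rewrite -scaler_sumr => /eqP; rewrite scaler_eq0 pnatr_eq0 /=.
under eq_bigr do rewrite scalerBr.
by rewrite sumrB -scaler_suml lam1 scale1r subr_eq0 => /eqP.
Qed.

Lemma edist_farthest j : j \in farthest -> edist s (x j) = maxJ (fun i => edist s (x i)).
Proof.
rewrite inE => /eqP jmax; apply/eqP; rewrite eq_le; apply/andP; split.
  exact: le_bigmax.
apply: bigmax_le => [|i _]; first exact: sqrtr_ge0.
by rewrite /edist ler_wsqrtr // jmax le_bigmax.
Qed.

End MinPowerCentre.

Theorem lemma5 (R : realType) (J : finType) (x : J -> 'rV[R]_2) (s : 'rV[R]_2) :
  injective x -> (0 < #|J|)%N ->
  (forall t : 'rV[R]_2, Ppow x s <= Ppow x t) ->
  exists lam : J -> R,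
    (forall j, (0 <= lam j)%R) /\
    (#|[set j | lam j != 0%R]| <= 3)%N /\
    s = \sum_(j : J) lam j *: Mpt x j /\
    \sum_(j : J) lam j = 1 /\
    (forall j, lam j * (edist s (x j) - maxJ (fun i => edist s (x i))) = 0).
Proof.
move=> _ J0 s_min.
have [mu [mu0 mu1 muF] mu_grad] := zero_in_farthest_hull J0 s_min.
have [lam [lam0 lam_mu lam3 lam1 lam_grad]] := caratheodory mu0 mu_grad.
rewrite mu1 in lam1.
exists lam; split=> //; split=> //; split; first exact: Mpt_barycentric.
split=> // j; have [->|lamj] := eqVneq (lam j) 0; first by rewrite mul0r.
have jF : j \in farthest x s by apply: (subsetP (subset_trans lam_mu muF)); rewrite inE.
by rewrite edist_farthest // subrr mulr0.
Qed.
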